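(* Let $\mathcal{C} \subseteq \mathbb{R}^n$ be a nonempty closed convex set, let $\theta^* \in \mathbb{R}^n$ (not necessarily in $\mathcal{C}$), let $Z$ be a random vector in $\mathbb{R}^n$ with $\mathbb{E} Z = 0$ and $\mathbb{E}\|Z\|^2 < \infty$, and for $\sigma > 0$ let $Y = \theta^* + \sigma Z$ and $\hat\theta(Y) = \Pi_{\mathcal{C}}(Y)$. Suppose the following ''locally polyhedral'' condition holds: $T_{\mathcal{C}}(\Pi_{\mathcal{C}}(\theta^* ))$ is a polyhedral cone, and there exists $r^* > 0$ such that $$T_{\mathcal{C}}(\Pi_{\mathcal{C}}(\theta^* )) \cap B_{r^*}(0) = F_{\mathcal{C}}(\Pi_{\mathcal{C}}(\theta^* )) \cap B_{r^*}(0).$$ Then $$\lim_{\sigma \downarrow 0} \frac{1}{\sigma^2} M(\hat\theta,\theta^* ) = \lim_{\sigma \downarrow 0} \frac{1}{\sigma^2} E(\hat\theta,\theta^* ) = \delta\big(T_{\mathcal{C}}(\Pi_{\mathcal{C}}(\theta^* )) \cap (\theta^* - \Pi_{\mathcal{C}}(\theta^* ))^\perp\big).$$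
   Context: $\|\cdot\|$ is the Euclidean norm and $\Pi_{\mathcal{C}}(x) = \arg\min_{\theta \in \mathcal{C}} \|x - \theta\|^2$ is the Euclidean projection onto a closed convex set. $B_r(x) = \{u : \|u - x\| \le r\}$. For $v \in \mathbb{R}^n$, $v^\perp = \{u : \langle u, v\rangle = 0\}$. For $\theta_0 \in \mathcal{C}$: $F_{\mathcal{C}}(\theta_0) = \{\theta - \theta_0 : \theta \in \mathcal{C}\}$, and the tangent cone is $T_{\mathcal{C}}(\theta_0) = \mathrm{cl}\{\alpha(\theta - \theta_0) : \alpha \ge 0, \theta \in \mathcal{C}\}$. A polyhedral cone is a set $\{x : Ax \le 0\}$ for a matrix $A$. The misspecified risk is $M(\hat\theta,\theta^* ) = \mathbb{E}\|\hat\theta(Y) - \Pi_{\mathcal{C}}(\theta^* )\|^2$ and the excess risk is $E(\hat\theta,\theta^* ) = \mathbb{E}\|\hat\theta(Y) - \theta^*\|^2 - \|\Pi_{\mathcal{C}}(\theta^* ) - \theta^*\|^2$, with expectations over $Z$. For a closed convex cone $T$, the (generalized) statistical dimension is $\delta(T) = \mathbb{E}\|\Pi_T(Z)\|^2$, the expectation being with respect to the distribution of $Z$. *)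

From HB Require Import structures.
From mathcomp Require Import all_boot all_order all_algebra.
From mathcomp Require Import all_classical all_reals all_analysis.
Set Implicit Arguments. Unset Strict Implicit. Unset Printing Implicit Defensive.
Import Order.TTheory GRing.Theory Num.Theory.
Import numFieldNormedType.Exports.
Local Open Scope classical_set_scope.
Local Open Scope ring_scope.

Section Defs.
Variables (R : realType) (n : nat).
Local Notation V := 'rV[R]_n.

Definition edot (u v : V) : R := \sum_(i < n) u ord0 i * v ord0 i.
Definition enorm (u : V) : R := Num.sqrt (edot u u).

Definition convex_set_rV (C : set V) : Prop :=
  forall x y, C x -> C y -> forall t : R, 0 <= t <= 1 ->
    C (t *: x + (1 - t) *: y).

Definition is_proj (C : set V) (x p : V) : Prop :=
  C p /\ forall q, C q -> enorm (x - p) ^+ 2 <= enorm (x - q) ^+ 2.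
Definition eproj (C : set V) (x : V) : V := xget 0 [set p | is_proj C x p].

Definition eball (x : V) (r : R) : set V := [set u | enorm (u - x) <= r].

Definition orth (v : V) : set V := [set u | edot u v = 0].

Definition feas (C : set V) (t0 : V) : set V :=
  [set u : V | exists2 t : V, C t & u = t - t0].

Definition tcone (C : set V) (t0 : V) : set V :=
  closure [set u : V | exists a : R, exists t : V,
                         [/\ 0 <= a, C t & u = a *: (t - t0)]].

Definition polyhedral_cone (K : set V) : Prop :=
  exists (m : nat) (A : 'M[R]_(m, n)),
    K = [set x | forall i : 'I_m, (A *m x^T) i ord0 <= 0].

End Defs.

From HB Require Import structures.
From mathcomp Require Import all_boot all_order all_algebra.
From mathcomp Require Import all_classical all_reals all_analysis.
From mathcomp Require Import measurable_realfun ring lra.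
Set Implicit Arguments. Unset Strict Implicit. Unset Printing Implicit Defensive.
Import Order.TTheory GRing.Theory Num.Theory.
Import numFieldNormedType.Exports.
Local Open Scope classical_set_scope.
Local Open Scope ring_scope.

(* Write p = eproj C theta, v = theta - p and K = T_C(p) /\ v^perp.  The rescaled
   increment q_s = (eproj C (theta + s z) - p) / s lies in T_C(p), has norm at
   most |z| and satisfies <q_s, v> <= 0 <= <q_s, v> + s <z - q_s, q_s>.  Since
   T_C(p) agrees with the feasible directions near 0, the variational inequality
   at theta + s z gives <z - q_s, u - q_s> <= 0 for every u in K with s |u|
   small.  So every cluster point of q_s as s -> 0+ is eproj K z, and q_s
   converges to it by compactness.  The normalised misspecified risk is
   E |q_s|^2 and the normalised excess risk is E (|q_s|^2 - 2 <q_s, v> / s),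
   where the cross term is squeezed between 0 and -<z - q_s, q_s>, whose limit
   -<z - eproj K z, eproj K z> vanishes because K is a cone.  Both integrands
   are dominated by 3 |Z|^2, so dominated convergence gives E |eproj K Z|^2. *)

Section EuclideanDot.
Variables (R : realType) (n : nat).
Local Notation V := 'rV[R]_n.
Local Notation N u := (edot u u).
Implicit Types (u v w : V) (a : R).

Lemma edotC u v : edot u v = edot v u.
Proof. by apply: eq_bigr => i _; rewrite mulrC. Qed.

Lemma edotDl u v w : edot (u + v) w = edot u w + edot v w.
Proof. by rewrite /edot -big_split; apply: eq_bigr => i _; rewrite mxE mulrDl. Qed.

Lemma edotZl a u w : edot (a *: u) w = a * edot u w.
Proof. by rewrite /edot mulr_sumr; apply: eq_bigr => i _; rewrite mxE mulrA. Qed.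

Lemma edotNl u w : edot (- u) w = - edot u w.
Proof. by rewrite -scaleN1r edotZl mulN1r. Qed.

Lemma edotBl u v w : edot (u - v) w = edot u w - edot v w.
Proof. by rewrite edotDl edotNl. Qed.

Lemma edot0l w : edot 0 w = 0.
Proof. by rewrite -(scale0r (0 : V)) edotZl mul0r. Qed.

Lemma edotDr u v w : edot w (u + v) = edot w u + edot w v.
Proof. by rewrite edotC edotDl !(edotC w). Qed.

Lemma edotZr a u w : edot w (a *: u) = a * edot w u.
Proof. by rewrite edotC edotZl edotC. Qed.

Lemma edotNr u w : edot w (- u) = - edot w u.
Proof. by rewrite edotC edotNl edotC. Qed.

Lemma edotBr u v w : edot w (u - v) = edot w u - edot w v.
Proof. by rewrite edotDr edotNr. Qed.

Definition edotE := (edotDl, edotDr, edotZl, edotZr, edotNl, edotNr,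
  edotBl, edotBr).

Lemma edotBB u v : N (u - v) = N u - 2 * edot u v + N v.
Proof. by rewrite !edotE (edotC v u); ring. Qed.

Lemma edotZZ a u : N (a *: u) = a ^+ 2 * N u.
Proof. by rewrite !edotE; ring. Qed.

Lemma edotNN u : N (- u) = N u.
Proof. by rewrite !edotE; ring. Qed.

Lemma edot_subC u v : N (u - v) = N (v - u).
Proof. by rewrite -opprB edotNN. Qed.

Lemma edot_ge0 u : 0 <= N u.
Proof. by apply: sumr_ge0 => i _; rewrite -expr2 sqr_ge0. Qed.

Lemma edot_eq0 u : N u = 0 -> u = 0.
Proof.
move=> u0; apply/rowP => i; rewrite mxE.
have sq_ge0 j : xpredT j -> 0 <= u ord0 j * u ord0 j by rewrite -expr2 sqr_ge0.
by move: (@psumr_eq0P _ _ _ _ sq_ge0 u0 i isT) => /eqP; rewrite mulf_eq0 orbb => /eqP.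
Qed.

Lemma enorm_sq u : enorm u ^+ 2 = N u.
Proof. by rewrite sqr_sqrtr // edot_ge0. Qed.

Lemma enorm_ge0 u : 0 <= enorm u.
Proof. exact: sqrtr_ge0. Qed.

Lemma edot2_le_add u v : 2 * edot u v <= N u + N v.
Proof. by have := edot_ge0 (u - v); rewrite edotBB; lra. Qed.

Lemma edot_sub_le u v : edot (u - v) v <= N u.
Proof.
rewrite edotBl; have := edot2_le_add u v.
by have := edot_ge0 u; have := edot_ge0 v; lra.
Qed.

Lemma normr_coord_le u i : `|u ord0 i| <= `|u|.
Proof.
rewrite (_ : `|u| = mx_norm u) // mx_normrE.
exact: (le_bigmax _ (fun ij : 'I_1 * 'I_n => `|u ij.1 ij.2|) (ord0, i)).
Qed.

Lemma normr_sq_le_edot u : `|u| ^+ 2 <= N u.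
Proof.
rewrite (_ : `|u| = mx_norm u) //.
have [->|/mx_norm_neq0[[i j] /= ->]] := eqVneq (mx_norm u) 0.
  by rewrite expr0n /= edot_ge0.
rewrite (ord1 i) /edot (bigD1 j) //= -expr2 real_normK ?num_real //.
by rewrite lerDl sumr_ge0 // => k _; rewrite -expr2 sqr_ge0.
Qed.

Lemma edot_le_normr_sq u : N u <= n%:R * `|u| ^+ 2.
Proof.
apply: (@le_trans _ _ (\sum_(i < n) `|u| ^+ 2)); last first.
  by rewrite sumr_const card_ord mulr_natl.
apply: ler_sum => i _; have := normr_coord_le u i.
by rewrite ler_norml => /andP[? ?]; nra.
Qed.

End EuclideanDot.

Lemma closed_le_continuous (X : topologicalType) (R : realType) (f : X -> R) (c : R) :
  continuous f -> closed [set x | f x <= c].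
Proof.
move=> fcont; apply: (@preimage_closed _ _ f [set y | y <= c]); last exact: closed_le.
by move=> x _; exact: fcont.
Qed.

Section EuclideanTopology.
Variables (R : realType) (n : nat).
Local Notation V := 'rV[R]_n.
Local Notation N u := (edot u u).

Lemma edot_continuous (X : topologicalType) (f g : X -> V) :
  continuous f -> continuous g -> continuous (fun x => edot (f x) (g x)).
Proof.
have coord_cont (h : X -> V) i : continuous h -> continuous (fun x => h x ord0 i).
  move=> hc x; apply: (@continuous_comp _ _ _ h (fun M : V => M ord0 i) x (hc x)).
  exact: coord_continuous.
move=> fc gc; rewrite /edot; apply: continuous_big => [|i _].
  exact: add_continuous.
by move=> x; apply: cvgM; apply: coord_cont.
Qed.

Lemma edotl_continuous (a : V) : continuous (fun u : V => edot u a).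
Proof.
by apply: edot_continuous => [x|]; [exact: cvg_id | exact: cst_continuous].
Qed.

Lemma edot_diag_continuous : continuous (fun u : V => N u).
Proof. by apply: edot_continuous => u; exact: cvg_id. Qed.

Lemma subl_continuous (x : V) : continuous (fun q : V => x - q).
Proof.
move=> q; exact: (@continuousB R V V (cst x) id q (@cst_continuous _ _ x q)
  (@cvg_id _ (nbhs q))).
Qed.

Lemma normr_le_of_edot_le (a b : V) : N a <= N b -> `|a| <= n.+1%:R * `|b|.
Proof.
move=> ab; have sq : `|a| ^+ 2 <= (n.+1%:R * `|b|) ^+ 2.
  apply: (le_trans (normr_sq_le_edot a)); apply: (le_trans ab).
  apply: (le_trans (edot_le_normr_sq b)); rewrite exprMn ler_wpM2r ?exprn_ge0 //.
  by rewrite -natrX ler_nat expnS expn1 (leq_trans (leqnSn n)) // leq_pmulr.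
by move: sq; rewrite ler_pXn2r // ?nnegrE ?mulr_ge0.
Qed.

Lemma nonexpansive_continuous (G : V -> V) :
  (forall x y, N (G x - G y) <= N (x - y)) -> continuous G.
Proof.
move=> hG x; apply/(@cvgrPdist_lt _ _ _ (nbhs x) (nbhs_filter x)) => e e0; near=> y.
apply: (le_lt_trans (normr_le_of_edot_le (hG x y))).
rewrite mulrC -ltr_pdivlMr ?ltr0n //; near: y.
by apply: (@cvgr_dist_lt _ _ _ (nbhs x) _ id x cvg_id); rewrite divr_gt0 ?ltr0n.
Unshelve. all: by end_near.
Qed.

Lemma compact_normr_le (M : R) : compact [set u : V | `|u| <= M].
Proof.
apply: bounded_closed_compact.
  exists M; split; first exact: num_real.
  by move=> M' hM' u /= hu; apply: (le_trans hu); apply: ltW.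
by apply: closed_le_continuous; exact: norm_continuous.
Qed.

End EuclideanTopology.

Section Projection.
Variables (R : realType) (n : nat).
Local Notation V := 'rV[R]_n.
Local Notation N u := (edot u u).
Implicit Types (x y p q c : V).
Variable C : set V.
Hypotheses (C0 : C !=set0) (Cclosed : closed C) (Cconvex : convex_set_rV C).

Lemma is_projE x p :
  is_proj C x p <-> C p /\ forall q, C q -> N (x - p) <= N (x - q).
Proof.
by split => -[Cp h]; split => // q Cq; have := h q Cq; rewrite !enorm_sq.
Qed.

(* The distance to [x] has a minimiser on the compact set of points of [C]
   at least as close to [x] as a fixed [c0] in [C]. *)
Lemma is_proj_exists x : exists p, is_proj C x p.
Proof.
have [c0 Cc0] := C0; pose rho := N (x - c0).
have dist_cont : continuous (fun q : V => N (x - q)).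
  by apply: edot_continuous; exact: subl_continuous.
pose S := C `&` [set q | N (x - q) <= rho].
have Sclosed : closed S.
  by apply: closedI => //; exact: closed_le_continuous.
have Scompact : compact S.
  apply: (subclosed_compact Sclosed (@compact_normr_le R n (`|x| + (1 + rho)))).
  move=> q [_ /= hq]; have := normr_sq_le_edot (x - q).
  have := normr_ge0 (x - q); have := edot_ge0 (x - c0); rewrite -/rho in hq.
  move=> *; have xq : `|x - q| <= 1 + rho by nra.
  rewrite -[q](subKr x); apply: (le_trans (ler_normB _ _)); exact: lerD.
have [p Sp pmin] := @compact_EVT_min _ _ (fun q : V => N (x - q)) S
  (ex_intro _ c0 (conj Cc0 (lexx _))) Scompact (continuous_subspaceT dist_cont).
move: Sp; rewrite inE => -[Cp prho]; exists p; apply/is_projE; split => // q Cq.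
have [qrho|/ltW] := leP (N (x - q)) rho; last exact: le_trans.
by apply: pmin; rewrite inE.
Qed.

(* Otherwise a small step from [p] towards [c] would get closer to [x]. *)
Lemma is_proj_var x p : is_proj C x p -> forall c, C c -> edot (x - p) (c - p) <= 0.
Proof.
move=> /is_projE [Cp pmin] c Cc; set a := x - p; set d := c - p.
have step t : 0 < t <= 1 -> 2 * t * edot a d <= t ^+ 2 * N d.
  move=> /andP[t0 t1].
  have Cct : C (t *: c + (1 - t) *: p) by apply: Cconvex => //; rewrite ltW.
  have := pmin _ Cct; have -> : x - (t *: c + (1 - t) *: p) = a - t *: d.
    by apply/rowP => i; rewrite !mxE; ring.
  by rewrite (edotBB a) edotZZ edotZr; lra.
rewrite leNgt; apply/negP => ad_gt0; have := edot_ge0 d => Nd_ge0.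
pose t := edot a d / (edot a d + N d).
have den_gt0 : 0 < edot a d + N d by lra.
have t_gt0 : 0 < t by rewrite divr_gt0.
have tE : t * (edot a d + N d) = edot a d by rewrite divfK // gt_eqF.
have t_le1 : t <= 1 by rewrite ler_pdivrMr // mul1r; lra.
by have := step t; rewrite t_gt0 t_le1 expr2 => /(_ isT); nra.
Qed.

Lemma var_is_proj x p :
  C p -> (forall c, C c -> edot (x - p) (c - p) <= 0) -> is_proj C x p.
Proof.
move=> Cp pvar; apply/is_projE; split => // q Cq.
have -> : x - q = (x - p) - (q - p) by apply/rowP => i; rewrite !mxE; ring.
by rewrite (edotBB (x - p)); have := pvar q Cq; have := edot_ge0 (q - p); lra.
Qed.

Lemma is_proj_nonexpansive x y p p' : is_proj C x p -> is_proj C y p' ->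
  N (p - p') <= N (x - y).
Proof.
move=> hp hp'; have [Cp _] := hp; have [Cp' _] := hp'.
have var_x : edot (x - p) (- (p - p')) <= 0.
  by rewrite opprB; exact: (is_proj_var hp Cp').
have var_y : edot (y - p') (p - p') <= 0 := is_proj_var hp' Cp.
have xpE : x - p = (x - y - (p - p')) + (y - p').
  by apply/rowP => i; rewrite !mxE; ring.
move: var_x var_y; rewrite xpE; move: (p - p') (x - y) (y - p') => a b c.
by rewrite !edotE; have := edot2_le_add b a; have := edot_ge0 b; lra.
Qed.

Lemma is_proj_unique x p p' : is_proj C x p -> is_proj C x p' -> p = p'.
Proof.
move=> hp hp'; have := is_proj_nonexpansive hp hp'; rewrite subrr edot0l.
by move=> le0; apply/eqP; rewrite -subr_eq0; apply/eqP/edot_eq0/le_anti;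
  rewrite le0 edot_ge0.
Qed.

Lemma eproj_spec x : is_proj C x (eproj C x).
Proof. exact: xgetPex (is_proj_exists x). Qed.

Lemma eproj_in x : C (eproj C x).
Proof. by case: (eproj_spec x). Qed.

Lemma eproj_var x c : C c -> edot (x - eproj C x) (c - eproj C x) <= 0.
Proof. exact: (is_proj_var (eproj_spec x)). Qed.

Lemma eproj_min x q : C q -> N (x - eproj C x) <= N (x - q).
Proof. by have /is_projE[_] := eproj_spec x; apply. Qed.

Lemma eprojE x p :
  C p -> (forall c, C c -> edot (x - p) (c - p) <= 0) -> eproj C x = p.
Proof.
by move=> Cp pvar; apply: is_proj_unique (eproj_spec x) (var_is_proj Cp pvar).
Qed.

Lemma eproj_nonexpansive x y : N (eproj C x - eproj C y) <= N (x - y).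
Proof. exact: is_proj_nonexpansive (eproj_spec x) (eproj_spec y). Qed.

Lemma eproj_continuous : continuous (eproj C).
Proof. exact: nonexpansive_continuous eproj_nonexpansive. Qed.

Lemma eproj_affine_sqdist_continuous (theta a : V) (s : R) :
  continuous (fun y : V => N (eproj C (theta + s *: y) - a)).
Proof.
have proj_cont := eproj_continuous.
have shifted_cont : continuous (fun y : V => eproj C (theta + s *: y) - a).
  move=> y; have affine_cont : {for y, continuous (fun y : V => theta + s *: y)}.
    apply: (@cvgD R V V (nbhs y) _ _ _ _ _ (cvg_cst theta)).
    exact: (@cvgZ R V V (nbhs y) _ _ id _ _ (cvg_cst s) cvg_id).
  apply: (@cvgB R _ _ (nbhs y) _ _ _ _ _ _ (@cst_continuous _ _ a y)).
  exact: (continuous_comp affine_cont (proj_cont _)).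
exact: edot_continuous.
Qed.

End Projection.

Lemma cluster_closed (X : Type) (Y : topologicalType) (F : set_system X)
    (f : X -> Y) (B : set Y) (q : Y) :
  cluster (f @ F) q -> closed B -> (\forall x \near F, B (f x)) -> B q.
Proof.
by rewrite clusterE => cq Bclosed FB; rewrite (closure_id B).1 //; exact: cq FB.
Qed.

Lemma exprSMr_cvg_at_right0 (R : realType) (m : nat) (c : R) :
  s ^+ m.+1 * c @[s --> 0^'+] --> 0.
Proof.
apply: cvg_at_right_filter.
rewrite [X in _ --> X](_ : 0 = 0 ^+ m.+1 * c); last by rewrite expr0n mul0r.
by apply: cvgM; [exact: exprn_continuous | exact: cvg_cst].
Qed.

Section PolyhedralCone.
Variables (R : realType) (n : nat).
Local Notation V := 'rV[R]_n.
Variable K : set V.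
Hypothesis Kpoly : polyhedral_cone K.

Lemma polyhedral_coneZ a x : 0 <= a -> K x -> K (a *: x).
Proof.
case: Kpoly => m [A ->] a_ge0 /= Kx i.
by rewrite linearZ /= -scalemxAr mxE; exact: mulr_ge0_le0.
Qed.

Lemma polyhedral_cone_convex : convex_set_rV K.
Proof.
case: Kpoly => m [A ->] /= x y Kx Ky t /andP[t_ge0 t_le1] i.
rewrite linearD !linearZ /= mulmxDr -!scalemxAr !mxE.
by move: (Kx i) (Ky i); rewrite !mxE; nra.
Qed.

End PolyhedralCone.

Section LocalProjection.
Variables (R : realType) (n : nat).
Local Notation V := 'rV[R]_n.
Local Notation N u := (edot u u).
Variable C : set V.
Hypotheses (C0 : C !=set0) (Cclosed : closed C) (Cconvex : convex_set_rV C).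
Variable theta : V.
Local Notation t0 := (eproj C theta).
Local Notation v := (theta - eproj C theta).
Local Notation TC := (tcone C (eproj C theta)).
Local Notation K := (TC `&` orth (theta - eproj C theta)).
Hypothesis TCpoly : polyhedral_cone TC.
Variable rs : R.
Hypothesis rs_gt0 : 0 < rs.
Hypothesis TClocal : TC `&` eball 0 rs = feas C t0 `&` eball 0 rs.

Lemma tcone_feas a c : 0 <= a -> C c -> TC (a *: (c - t0)).
Proof. by move=> a_ge0 Cc; apply: subset_closure; exists a, c. Qed.

Lemma critical_cone_closed : closed K.
Proof.
apply: closedI; first exact: closed_closure.
apply: (@preimage_closed _ _ (fun u : V => edot u v) [set 0]); last exact: closed_eq.
by move=> u _; exact: edotl_continuous.
Qed.

Lemma critical_coneZ a u : 0 <= a -> K u -> K (a *: u).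
Proof.
move=> a_ge0 [TCu uv]; split; first exact: (polyhedral_coneZ TCpoly a_ge0 TCu).
by rewrite /orth /= edotZl uv mulr0.
Qed.

Lemma critical_cone_convex : convex_set_rV K.
Proof.
move=> x y [TCx xv] [TCy yv] t t01; split.
  exact: (polyhedral_cone_convex TCpoly TCx TCy t01).
by rewrite /orth /= edotDl !edotZl xv yv !mulr0 addr0.
Qed.

Lemma critical_cone0 : K !=set0.
Proof.
exists 0; split; last by rewrite /orth /= edot0l.
by rewrite -(scale0r (t0 - t0)); apply: tcone_feas => //; exact: eproj_in.
Qed.

Let Kproj := eproj_var critical_cone0 critical_cone_closed critical_cone_convex.
Let Kin := eproj_in critical_cone0 critical_cone_closed.

Variable z : V.
Local Notation k := (eproj K z).

Lemma eproj_critical_norm_le : N k <= N z.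
Proof.
have := Kproj z (critical_coneZ (lexx 0) (Kin z)).
rewrite scale0r sub0r edotNr edotBl.
by have := edot2_le_add z k; have := edot_ge0 z; lra.
Qed.

(* Testing the variational inequality at [0] and [2 k] gives both signs. *)
Lemma eproj_critical_orth : edot (z - k) k = 0.
Proof.
have := Kproj z (critical_coneZ (ler0n R 0) (Kin z)).
have := Kproj z (critical_coneZ (ler0n R 2) (Kin z)).
rewrite scale0r sub0r edotNr scaler_nat mulr2n addrK.
by move=> *; apply/le_anti/andP; split; lra.
Qed.

Definition diffq (s : R) : V := s^-1 *: (eproj C (theta + s *: z) - t0).
Local Notation p s := (eproj C (theta + s *: z)).
Local Notation q := diffq.

Lemma diffq_sub s : 0 < s -> p s - t0 = s *: q s.
Proof. by move=> s_gt0; rewrite /diffq scalerA mulfV ?gt_eqF // scale1r. Qed.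

Lemma diffqE s : 0 < s -> p s = t0 + s *: q s.
Proof. by move=> s_gt0; rewrite -diffq_sub // [t0 + _]addrC subrK. Qed.

Lemma diffq_tcone s : 0 < s -> TC (q s).
Proof.
by move=> s_gt0; apply: tcone_feas; [rewrite invr_ge0 ltW | exact: eproj_in].
Qed.

Lemma diffq_norm_le s : 0 < s -> N (q s) <= N z.
Proof.
move=> s_gt0; have := eproj_nonexpansive C0 Cclosed Cconvex (theta + s *: z) theta.
by rewrite diffq_sub // addrC addKr !edotZZ ler_pM2l // exprn_gt0.
Qed.

Lemma diffq_normal s : 0 < s -> edot (q s) v <= 0.
Proof.
move=> s_gt0.
have := eproj_var C0 Cclosed Cconvex theta (eproj_in C0 Cclosed (theta + s *: z)).
by rewrite diffq_sub // edotZr pmulr_rle0 // edotC.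
Qed.

Lemma proj_residualE s : 0 < s -> theta + s *: z - p s = v + s *: (z - q s).
Proof. by move=> s_gt0; rewrite diffqE //; apply/rowP => i; rewrite !mxE; ring. Qed.

Lemma diffq_normal_ge s : 0 < s -> - edot (q s) v <= s * edot (z - q s) (q s).
Proof.
move=> s_gt0.
have := eproj_var C0 Cclosed Cconvex (theta + s *: z) (eproj_in C0 Cclosed theta).
have -> : t0 - p s = - (s *: q s) by rewrite -diffq_sub // opprB.
rewrite proj_residualE // edotNr edotDl (edotZl s) !(edotZr s) (edotC v).
move=> h; have : 0 <= s * (edot (q s) v + s * edot (z - q s) (q s)) by lra.
by rewrite pmulr_rge0 //; lra.
Qed.

Lemma diffq_normal_le s : 0 < s -> - edot (q s) v <= s * N z.
Proof.
move=> s_gt0; apply: (le_trans (diffq_normal_ge s_gt0)).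
by rewrite ler_pM2l // edot_sub_le.
Qed.

(* Local polyhedrality makes [eproj C theta + s *: u] feasible for small [s]. *)
Lemma diffq_var s u : 0 < s -> K u -> s ^+ 2 * N u <= rs ^+ 2 ->
  edot (z - q s) (u - q s) <= 0.
Proof.
move=> s_gt0 [TCu uv] su_small.
have : (feas C t0 `&` eball 0 rs) (s *: u).
  rewrite -TClocal; split; first exact: (polyhedral_coneZ TCpoly (ltW s_gt0) TCu).
  rewrite /eball /= subr0 -(ler_pXn2r (n:=2)) ?nnegrE ?enorm_ge0 ?(ltW rs_gt0) //.
  by rewrite enorm_sq edotZZ.
move=> -[[c Cc suE] _].
have := eproj_var C0 Cclosed Cconvex (theta + s *: z) Cc.
have -> : c - p s = s *: (u - q s).
  by rewrite diffqE // -[c](subrK t0) -suE; apply/rowP => i; rewrite !mxE; ring.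
rewrite proj_residualE // edotDl (edotZl s) !(edotZr s) (edotBr u (q s) v).
rewrite (edotC v u) uv (edotC v (q s)) => h.
have : 0 <= s * - edot (q s) v.
  by apply: mulr_ge0; [exact: ltW | rewrite oppr_ge0 diffq_normal].
move=> sv; have : s * (s * edot (z - q s) (u - q s)) <= 0 by lra.
by rewrite !pmulr_rle0.
Qed.

(* A cluster point inherits the limits of the constraints satisfied by
   [diffq s] as [s] goes to [0]: it lies in the critical cone and satisfies
   the variational inequality characterising the projection onto it. *)
Lemma diffq_cluster y : cluster (q @ 0^'+) y -> y = k.
Proof.
move=> cy; have near_gt0 := @nbhs_right_gt R 0.
have TCy : TC y.
  apply: (cluster_closed cy (@closed_closure _ _)).
  by apply: filterS near_gt0 => s; exact: diffq_tcone.
have yv_le0 : edot y v <= 0.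
  apply: (cluster_closed (B := [set u | edot u v <= 0]) cy).
    exact: closed_le_continuous (edotl_continuous (a := v)).
  by apply: filterS near_gt0 => s; exact: diffq_normal.
have yv_ge0 : - edot y v <= 0.
  apply/ler_addgt0Pr => e e_gt0; rewrite add0r -edotNr.
  apply: (cluster_closed (B := [set u | edot u (- v) <= e]) cy).
    exact: closed_le_continuous (edotl_continuous (a := - v)).
  near=> s; rewrite /= edotNr; apply: (le_trans (diffq_normal_le _)).
    by near: s; exact: near_gt0.
  rewrite -[s]expr1; near: s; apply: cvgr_le e_gt0.
  exact: exprSMr_cvg_at_right0.
have Ky : K y by split => //; apply/le_anti; rewrite yv_le0 -oppr_le0.
apply/esym/(eprojE critical_cone0 critical_cone_closed critical_cone_convex Ky).
move=> u Ku; apply: (cluster_closed (B := [set w | edot (z - w) (u - w) <= 0]) cy).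
  by apply: closed_le_continuous; apply: edot_continuous; exact: subl_continuous.
near=> s; have s_gt0 : 0 < s by near: s; exact: near_gt0.
apply: diffq_var s_gt0 Ku _; near: s; apply: cvgr_le (exprn_gt0 2 rs_gt0).
exact: exprSMr_cvg_at_right0.
Unshelve. all: by end_near.
Qed.

Lemma diffq_cvg : q s @[s --> 0^'+] --> k.
Proof.
pose M := n.+1%:R * `|z| + 1.
have normq_le s : 0 < s -> `|q s| <= n.+1%:R * `|z|.
  by move=> s_gt0; apply/normr_le_of_edot_le/diffq_norm_le.
have normk_le : `|k| <= n.+1%:R * `|z|.
  exact/normr_le_of_edot_le/eproj_critical_norm_le.
have ballM : compact [set u : V | `|u| <= M] := @compact_normr_le R n M.
have qM : (q @ 0^'+) [set u : V | `|u| <= M].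
  apply: filterS (@nbhs_right_gt R 0) => s s_gt0 /=.
  by rewrite /M; have := normq_le s s_gt0; lra.
have kM : nbhs k [set u : V | `|u| <= M].
  near=> u => /=; have : `|k - u| < 1.
    by near: u; exact: (@cvgr_dist_lt _ _ _ (nbhs k) _ id k cvg_id 1 ltr01).
  by have := ler_distD k u 0; rewrite !subr0 distrC /M; lra.
apply: (compact_cluster_set1 (@norm_hausdorff _ _) ballM kM) => //.
apply/seteqP; split => [y /diffq_cluster //|_ ->].
by have [y [_ /[dup] cy /diffq_cluster <-]] := ballM _ _ qM.
Unshelve. all: by end_near.
Qed.

Lemma misspec_ratioE s : 0 < s -> s ^-2 * N (p s - t0) = N (q s).
Proof. by move=> s_gt0; rewrite diffq_sub // edotZZ mulKf // expf_neq0 // gt_eqF. Qed.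

Lemma excess_ratioE s : 0 < s ->
  s ^-2 * (N (p s - theta) - N (t0 - theta)) = N (q s) - 2 * (edot (q s) v / s).
Proof.
move=> s_gt0; have -> : p s - theta = s *: q s - v.
  by rewrite diffqE //; apply/rowP => i; rewrite !mxE; ring.
have -> : t0 - theta = - v by rewrite opprB.
rewrite edotNN (edotBB (s *: q s)) edotZZ (edotZl s).
by field; rewrite gt_eqF.
Qed.

Lemma cross_term_bounds s : 0 < s ->
  - edot (z - q s) (q s) <= edot (q s) v / s <= 0.
Proof.
move=> s_gt0; rewrite pmulr_lle0 ?invr_gt0 // diffq_normal // andbT.
by rewrite lerNl -mulNr ler_pdivrMr // mulrC; exact: diffq_normal_ge.
Qed.

(* The cross term vanishes in the limit because [k] is orthogonal to [z - k]. *)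
Lemma cross_term_cvg : edot (q s) v / s @[s --> 0^'+] --> 0.
Proof.
have lower_cvg : - edot (z - q s) (q s) @[s --> 0^'+] --> 0.
  have : - edot (z - q s) (q s) @[s --> 0^'+] --> - edot (z - k) k.
    have cross_cont : continuous (fun u : V => edot (z - u) u).
      by apply: edot_continuous => [|u]; [exact: subl_continuous | exact: cvg_id].
    exact: cvgN (cvg_comp q _ diffq_cvg (cross_cont k)).
  by rewrite eproj_critical_orth oppr0.
apply: (squeeze_cvgr _ lower_cvg (cvg_cst 0)).
by near=> s; apply: cross_term_bounds; near: s; exact: nbhs_right_gt.
Unshelve. all: by end_near.
Qed.

Lemma misspec_ratio_cvg : s ^-2 * N (p s - t0) @[s --> 0^'+] --> N k.
Proof.
apply: (@cvg_trans _ (N (q s) @[s --> 0^'+])).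
  apply: near_eq_cvg; near=> s.
  by rewrite misspec_ratioE //; near: s; exact: nbhs_right_gt.
exact: (cvg_comp q (fun u => N u) diffq_cvg (@edot_diag_continuous R n k)).
Unshelve. all: by end_near.
Qed.

Lemma excess_ratio_cvg :
  s ^-2 * (N (p s - theta) - N (t0 - theta)) @[s --> 0^'+] --> N k.
Proof.
apply: (@cvg_trans _ (N (q s) - 2 * (edot (q s) v / s) @[s --> 0^'+])).
  apply: near_eq_cvg; near=> s.
  by rewrite excess_ratioE //; near: s; exact: nbhs_right_gt.
suff : N (q s) - 2 * (edot (q s) v / s) @[s --> 0^'+] --> N k - 2 * 0.
  by rewrite mulr0 subr0.
apply: cvgB; last by apply: cvgM; [exact: cvg_cst | exact: cross_term_cvg].
exact: (cvg_comp q (fun u => N u) diffq_cvg (@edot_diag_continuous R n k)).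
Unshelve. all: by end_near.
Qed.

Lemma misspec_ratio_bounds s : 0 < s -> 0 <= s ^-2 * N (p s - t0) <= N z.
Proof. by move=> s_gt0; rewrite misspec_ratioE // edot_ge0 diffq_norm_le. Qed.

Lemma excess_ratio_bounds s : 0 < s ->
  0 <= s ^-2 * (N (p s - theta) - N (t0 - theta)) <= 3 * N z.
Proof.
move=> s_gt0; rewrite excess_ratioE //.
have /andP[? ?] := cross_term_bounds s_gt0; have := edot_sub_le z (q s).
have := diffq_norm_le s_gt0; have := edot_ge0 (q s).
by move=> *; apply/andP; split; lra.
Qed.

End LocalProjection.

Section MeasurableContinuousComp.
Variables (R : realType) (n : nat) (d : measure_display) (T : measurableType d).
Local Notation V := 'rV[R]_n.
Variable Z : T -> V.
Hypothesis Zmeas : forall i : 'I_n, measurable_fun setT (fun w => Z w ord0 i).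

Lemma countable_fibers_measurable_fun (U : countType) (m : T -> U) (H : U -> R) :
  (forall c, measurable (m @^-1` [set c])) -> measurable_fun setT (H \o m).
Proof.
move=> mfib _ B _; rewrite setTI.
have -> : (H \o m) @^-1` B = \bigcup_c (m @^-1` [set c] `&` [set _ | B (H c)]).
  by apply/seteqP; split => [w Bw|w [c _ [/= -> //]]]; exists (m w).
apply: countable_bigcupT_measurable => [|c]; first exact: countableP.
apply: measurableI => //; have [Bc|nBc] := pselect (B (H c)).
  by rewrite (_ : [set _ | _] = setT) //; apply/seteqP; split.
by rewrite (_ : [set _ | _] = set0) //; apply/seteqP; split.
Qed.

(* [Z] rounded down to the grid of mesh [1 / k.+1], recorded by its integer
   coordinates, which range over a countable type. *)
Definition grid_index (k : nat) (w : T) : {ffun 'I_n -> int} :=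
  [ffun i => Num.floor (k.+1%:R * Z w ord0 i)].

Definition grid_point (k : nat) (c : {ffun 'I_n -> int}) : V :=
  \row_i ((c i)%:~R / k.+1%:R).

Lemma grid_index_fiber k c : measurable (grid_index k @^-1` [set c]).
Proof.
have -> : grid_index k @^-1` [set c] = \bigcap_(i in setT)
    [set w | (c i)%:~R <= k.+1%:R * Z w ord0 i < (c i + 1)%:~R].
  apply/seteqP; split => [w <- i _|w wc] /=; first by rewrite ffunE floor_itv.
  by apply/ffunP => i; rewrite ffunE; apply/eqP; rewrite floor_eq; exact: wc.
apply: fin_bigcap_measurable => [|i _]; first exact: finite_finset.
have scaled_meas : measurable_fun setT (fun w => k.+1%:R * Z w ord0 i).
  by apply: measurable_funM => //; exact: measurable_cst.
have := scaled_meas measurableT _ (measurable_itv `[(c i)%:~R, (c i + 1)%:~R[).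
by rewrite setTI; congr measurable; apply/seteqP; split => w /=; rewrite in_itv.
Qed.

Lemma grid_point_dist k w i :
  `|Z w ord0 i - grid_point k (grid_index k w) ord0 i| <= k.+1%:R^-1.
Proof.
rewrite mxE ffunE; set x := Z w ord0 i.
have k_gt0 : 0 < k.+1%:R :> R by rewrite ltr0n.
have := floor_itv (k.+1%:R * x); set f := Num.floor _.
rewrite intrD (_ : 1%:~R = 1 :> R) // => /andP[fx xf].
have -> : x - f%:~R / k.+1%:R = (k.+1%:R * x - f%:~R) / k.+1%:R.
  by field; rewrite gt_eqF.
rewrite ger0_norm; last by apply: divr_ge0; [lra | exact: ltW].
by rewrite -[leRHS]mul1r ler_pM2r ?invr_gt0 //; lra.
Qed.

Lemma grid_point_cvg w : grid_point k (grid_index k w) @[k --> \oo] --> Z w.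
Proof.
apply/cvgrPdist_lt => e e_gt0; near=> k.
have ke : k.+1%:R^-1 < e.
  near: k; exists (Num.truncn e^-1) => // k /= ek.
  rewrite invf_plt ?posrE ?ltr0n //.
  by apply: (lt_le_trans (truncnS_gt _)); rewrite ler_nat.
apply: le_lt_trans ke.
rewrite (_ : `|_| = mx_norm (Z w - grid_point k (grid_index k w))) // mx_normrE.
apply: bigmax_le => //= -[a j] _ /=; rewrite (ord1 a) !mxE.
by have := grid_point_dist k w j; rewrite mxE.
Unshelve. all: by end_near.
Qed.

Lemma measurable_fun_continuous_comp (h : V -> R) :
  continuous h -> measurable_fun setT (h \o Z).
Proof.
move=> hcont.
apply: (measurable_fun_cvg (h := fun k => h \o grid_point k \o grid_index k)).
  by move=> k; apply: countable_fibers_measurable_fun; exact: grid_index_fiber.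
by move=> w _; apply: continuous_cvg; [exact: hcont | exact: grid_point_cvg].
Qed.

End MeasurableContinuousComp.

Section DominatedConvergenceAtRight.
Variables (R : realType) (d : measure_display) (T : measurableType d).
Variable mu : {measure set T -> \bar R}.

Lemma dominated_cvg_at_right0 (h : R -> T -> R) (l g : T -> R) :
  (forall s, measurable_fun setT (h s)) ->
  (forall s w, 0 < s -> 0 <= h s w <= g w) ->
  (forall w, h s w @[s --> 0^'+] --> l w) ->
  mu.-integrable setT (fun w => (g w)%:E) ->
  mu.-integrable setT (fun w => (l w)%:E) ->
  (\int[mu]_w (h s w)%:E @[s --> 0^'+] --> \int[mu]_w (l w)%:E)%E.
Proof.
move=> hmeas hbound hcvg gint lint.
have lfin := integrable_fin_num measurableT lint.
rewrite -(fineK lfin); apply/cvge_at_rightP => u [u_gt0 u_cvg]; rewrite fineK //.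
apply: (@dominated_cvg _ _ _ mu setT measurableT (fun j w => (h (u j) w)%:E)
  (fun w => (l w)%:E) (fun w => (g w)%:E)) => //.
- by move=> j; apply/measurable_EFinP.
- move=> w _; apply/fine_cvgP; split; first exact: nearW.
  by move/cvg_at_rightP : (hcvg w); apply.
- move=> j w _; have /andP[h_ge0 h_le] := hbound (u j) w (u_gt0 j).
  by rewrite gee0_abs ?lee_fin.
Qed.

End DominatedConvergenceAtRight.

Section ProbabilityShift.
Variables (R : realType) (d : measure_display) (T : measurableType d).
Variable P : probability T R.

Lemma integral_shift_cst (f : T -> R) (c : R) :
  measurable_fun setT f -> 0 <= c -> (forall w, c <= f w) ->
  (\int[P]_w (f w)%:E = \int[P]_w (f w - c)%:E + c%:E)%E.
Proof.
move=> fmeas c_ge0 cf.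
rewrite -[X in (_ + X)%E]mule1 -(probability_setT P) -integral_cst //.
rewrite -ge0_integralD //.
- by apply: eq_integral => w _; rewrite /= -EFinD subrK.
- by move=> w _; rewrite lee_fin subr_ge0.
- by apply/measurable_EFinP; exact: measurable_funB fmeas (measurable_cst c).
Qed.

End ProbabilityShift.

Section ProjectionRisk.
Variables (R : realType) (n : nat) (d : measure_display) (T : measurableType d).
Variable P : probability T R.
Local Notation V := 'rV[R]_n.
Local Notation N u := (edot u u).
Variable C : set V.
Hypotheses (C0 : C !=set0) (Cclosed : closed C) (Cconvex : convex_set_rV C).
Variable theta : V.
Local Notation t0 := (eproj C theta).
Local Notation TC := (tcone C (eproj C theta)).
Local Notation K := (TC `&` orth (theta - eproj C theta)).
Hypothesis TCpoly : polyhedral_cone TC.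
Variable rs : R.
Hypothesis rs_gt0 : 0 < rs.
Hypothesis TClocal : TC `&` eball 0 rs = feas C t0 `&` eball 0 rs.
Variable Z : T -> V.
Hypothesis Zmeas : forall i : 'I_n, measurable_fun setT (fun w => Z w ord0 i).
Hypothesis Zsq : forall i : 'I_n, (\int[P]_w ((Z w ord0 i) ^+ 2)%:E < +oo)%E.

Lemma scaled_edot_integrable (c : R) :
  P.-integrable setT (fun w => (c * N (Z w))%:E).
Proof.
have -> : (fun w => (c * N (Z w))%:E) =
    (fun w => c%:E * \sum_(i < n) ((Z w ord0 i) ^+ 2)%:E)%E.
  by apply/funext => w; rewrite sumEFin -EFinM; congr (_ * _)%:E; apply: eq_bigr.
apply: integrableZl => //; apply: integrable_sum => // i _.
apply/integrableP; split; first exact/measurable_EFinP/measurable_funX.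
rewrite (eq_integral (fun w => (Z w ord0 i ^+ 2)%:E)) ?Zsq // => w _.
by rewrite gee0_abs // lee_fin sqr_ge0.
Qed.

Lemma proj_sqdist_measurable s a :
  measurable_fun setT (fun w => N (eproj C (theta + s *: Z w) - a)).
Proof.
exact: measurable_fun_continuous_comp Zmeas _
  (eproj_affine_sqdist_continuous C0 Cclosed Cconvex
     (theta := theta) (a := a) (s := s)).
Qed.

Lemma critical_sqnorm_integrable :
  P.-integrable setT (fun w => (N (eproj K (Z w)))%:E).
Proof.
apply: le_integrable (scaled_edot_integrable 1) => //.
  apply/measurable_EFinP.
  apply: (measurable_fun_continuous_comp Zmeas (h := fun y => N (eproj K y))) => y.
  have projK_cont := eproj_continuous (critical_cone0 C0 Cclosed theta)
    (@critical_cone_closed R n C theta) (critical_cone_convex TCpoly).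
  exact: (continuous_comp (projK_cont y) (@edot_diag_continuous R n _)).
move=> w _; rewrite !gee0_abs ?lee_fin ?mul1r ?edot_ge0 //.
exact: eproj_critical_norm_le.
Qed.

Lemma misspecified_risk_cvg :
  ((s ^-2)%:E * \int[P]_w (enorm (eproj C (theta + s *: Z w) - t0) ^+ 2)%:E
    @[s --> 0^'+] --> \int[P]_w (enorm (eproj K (Z w)) ^+ 2)%:E)%E.
Proof.
under eq_integral => w _ do rewrite enorm_sq.
apply: (@cvg_trans _
  (\int[P]_w (s ^-2 * N (eproj C (theta + s *: Z w) - t0))%:E @[s --> 0^'+])%E).
  apply: near_eq_cvg; near=> s; have s_gt0 : 0 < s by near: s; exact: nbhs_right_gt.
  rewrite -ge0_integralZl_EFin ?invr_ge0 ?exprn_ge0 ?(ltW s_gt0) //.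
  - by apply: eq_integral => w _; rewrite enorm_sq EFinM.
  - by move=> w _; rewrite lee_fin sqr_ge0.
  - apply/measurable_EFinP; under eq_fun do rewrite enorm_sq.
    exact: proj_sqdist_measurable.
apply: (dominated_cvg_at_right0 _ _ _ (scaled_edot_integrable 1)
  critical_sqnorm_integrable).
- move=> s; apply: measurable_funM; first exact: measurable_cst.
  exact: proj_sqdist_measurable.
- by move=> s w s_gt0; rewrite mul1r; exact: misspec_ratio_bounds.
- by move=> w; exact: (misspec_ratio_cvg C0 Cclosed Cconvex TCpoly rs_gt0 TClocal).
Unshelve. all: by end_near.
Qed.

Lemma excess_risk_cvg :
  ((s ^-2)%:E * (\int[P]_w (enorm (eproj C (theta + s *: Z w) - theta) ^+ 2)%:E
     - (enorm (t0 - theta) ^+ 2)%:E)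
    @[s --> 0^'+] --> \int[P]_w (enorm (eproj K (Z w)) ^+ 2)%:E)%E.
Proof.
under eq_integral => w _ do rewrite enorm_sq.
pose c := N (t0 - theta).
have excess_ge0 s w : 0 <= N (eproj C (theta + s *: Z w) - theta) - c.
  rewrite subr_ge0 /c edot_subC [X in _ <= X]edot_subC.
  exact: (eproj_min C0 Cclosed theta (eproj_in C0 Cclosed (theta + s *: Z w))).
have excess_meas s :
    measurable_fun setT (fun w => N (eproj C (theta + s *: Z w) - theta) - c).
  exact: measurable_funB (proj_sqdist_measurable s theta) (measurable_cst c).
apply: (@cvg_trans _ (\int[P]_w
  (s ^-2 * (N (eproj C (theta + s *: Z w) - theta) - c))%:E @[s --> 0^'+])%E).
  apply: near_eq_cvg; near=> s; have s_gt0 : 0 < s by near: s; exact: nbhs_right_gt.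
  rewrite [in RHS](eq_integral
    (fun w => (N (eproj C (theta + s *: Z w) - theta))%:E));
    last by move=> w _; rewrite enorm_sq.
  rewrite [in RHS](integral_shift_cst _ (c := c) (proj_sqdist_measurable s theta));
    [|exact: edot_ge0 | by move=> w; rewrite -subr_ge0].
  rewrite enorm_sq addeK // -ge0_integralZl_EFin //;
    last by rewrite invr_ge0 exprn_ge0 // ltW.
  - by move=> w _; rewrite lee_fin.
  - exact/measurable_EFinP.
apply: (dominated_cvg_at_right0 _ _ _ (scaled_edot_integrable 3)
  critical_sqnorm_integrable).
- by move=> s; apply: measurable_funM; [exact: measurable_cst | exact: excess_meas].
- by move=> s w s_gt0; exact: excess_ratio_bounds.
- by move=> w; exact: (excess_ratio_cvg C0 Cclosed Cconvex TCpoly rs_gt0 TClocal).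
Unshelve. all: by end_near.
Qed.

End ProjectionRisk.

Theorem theorem1 (R : realType) (n : nat)
  (d : measure_display) (T : measurableType d) (P : probability T R)
  (C : set 'rV[R]_n) (theta : 'rV[R]_n) (Z : T -> 'rV[R]_n) :
  C !=set0 -> closed C -> convex_set_rV C ->
  (forall i : 'I_n, measurable_fun setT (fun w => Z w ord0 i)) ->
  (forall i : 'I_n, (\int[P]_w (Z w ord0 i)%:E = 0)%E) ->
  (forall i : 'I_n, (\int[P]_w ((Z w ord0 i) ^+ 2)%:E < +oo)%E) ->
  polyhedral_cone (tcone C (eproj C theta)) ->
  (exists2 rs : R, 0 < rs &
     tcone C (eproj C theta) `&` eball 0 rs
     = feas C (eproj C theta) `&` eball 0 rs) ->
  let delta := (\int[P]_w
        (enorm (eproj (tcone C (eproj C theta) `&` orth (theta - eproj C theta))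
                     (Z w)) ^+ 2)%:E)%E in
  ((fun s : R => ((s ^-2)%:E *
       \int[P]_w (enorm (eproj C (theta + s *: Z w) - eproj C theta) ^+ 2)%:E)%E)
     @ 0^'+ --> delta)
  /\
  ((fun s : R => ((s ^-2)%:E *
       (\int[P]_w (enorm (eproj C (theta + s *: Z w) - theta) ^+ 2)%:E
        - (enorm (eproj C theta - theta) ^+ 2)%:E))%E)
     @ 0^'+ --> delta).
Proof.
move=> C0 Cclosed Cconvex Zmeas _ Zsq TCpoly [rs rs_gt0 TClocal] delta; split.
- exact: (misspecified_risk_cvg C0 Cclosed Cconvex TCpoly rs_gt0 TClocal Zmeas Zsq).
- exact: (excess_risk_cvg C0 Cclosed Cconvex TCpoly rs_gt0 TClocal Zmeas Zsq).
Qed.
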